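(* Let $(D,\mu,\alpha)$ be a Hom-associative algebra over a field $k$ and let $T:D\otimes D\to D\otimes D$ be a linear map. Assume there exist linear maps $\tilde T_1,\tilde T_2:D\otimes D\otimes D\to D\otimes D\otimes D$ such that $(\alpha\otimes\alpha)\circ T=T\circ(\alpha\otimes\alpha)$, $T\circ(\alpha\otimes\mu)=(\alpha\otimes\mu)\circ\tilde T_1\circ(T\otimes \mathrm{id}_D)$, $T\circ(\mu\otimes\alpha)=(\mu\otimes\alpha)\circ\tilde T_2\circ(\mathrm{id}_D\otimes T)$, $\tilde T_1\circ(T\otimes \mathrm{id}_D)\circ(\mathrm{id}_D\otimes T)=\tilde T_2\circ(\mathrm{id}_D\otimes T)\circ(T\otimes \mathrm{id}_D)$. Then $(D,\mu\circ T,\alpha)$ is also a Hom-associative algebra.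
   Context: All algebras are over a field $k$ and are not assumed unital. A Hom-associative algebra is a triple $(A,\mu,\alpha)$ with $A$ a vector space and $\mu:A\otimes A\to A$ (written $\mu(a\otimes a')=aa'$), $\alpha:A\to A$ linear maps such that $\alpha(aa')=\alpha(a)\alpha(a')$ and $\alpha(a)(a'a'')=(aa')\alpha(a'')$ for all $a,a',a''\in A$. Such a $T$ is called a Hom-pseudotwistor with companions $\tilde T_1,\tilde T_2$. *)

(* Tensor products are given by their universal property. *)
From HB Require Import structures.
From mathcomp Require Import all_boot all_algebra.
From Stdlib Require Import ClassicalEpsilon.
Set Implicit Arguments. Unset Strict Implicit. Unset Printing Implicit Defensive.
Import GRing.Theory.
Local Open Scope ring_scope.

Section Tensor.
Variable K : fieldType.

Definition is_lin (U V : lmodType K) (f : U -> V) : Prop :=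
  forall (a : K) (x y : U), f (a *: x + y) = a *: f x + f y.

Definition bilin (U V W : lmodType K) (f : U -> V -> W) : Prop :=
  (forall v, is_lin (fun u => f u v)) /\ (forall u, is_lin (f u)).

Definition trilin (U V W X : lmodType K) (f : U -> V -> W -> X) : Prop :=
  (forall v w, is_lin (fun u => f u v w)) /\
  (forall u w, is_lin (fun v => f u v w)) /\
  (forall u v, is_lin (f u v)).

(* [t : U -> V -> W] exhibits W as the tensor product U (x) V, t u v = u (x) v *)
Definition is_tensor2 (U V W : lmodType K) (t : U -> V -> W) : Prop :=
  bilin t /\
  forall (X : lmodType K) (f : U -> V -> X), bilin f ->
    exists! g : W -> X, is_lin g /\ forall u v, g (t u v) = f u v.

Definition is_tensor3 (U V W X : lmodType K) (t : U -> V -> W -> X) : Prop :=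
  trilin t /\
  forall (Y : lmodType K) (f : U -> V -> W -> Y), trilin f ->
    exists! g : X -> Y, is_lin g /\ forall u v w, g (t u v w) = f u v w.

Definition lift2 (U V W X : lmodType K) (t : U -> V -> W) (f : U -> V -> X)
  : W -> X :=
  epsilon (inhabits (fun _ => 0))
    (fun g => is_lin g /\ forall u v, g (t u v) = f u v).

Definition lift3 (U V W X Y : lmodType K) (t : U -> V -> W -> X)
  (f : U -> V -> W -> Y) : X -> Y :=
  epsilon (inhabits (fun _ => 0))
    (fun g => is_lin g /\ forall u v w, g (t u v w) = f u v w).

Variables (D DD DDD : lmodType K) (t2 : D -> D -> DD) (t3 : D -> D -> D -> DDD).

Definition tens2 (f g : D -> D) : DD -> DD :=
  lift2 t2 (fun a b => t2 (f a) (g b)).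

Definition tens_id_m (f : D -> D) (m : DD -> D) : DDD -> DD :=
  lift3 t3 (fun a b c => t2 (f a) (m (t2 b c))).

Definition tens_m_id (m : DD -> D) (f : D -> D) : DDD -> DD :=
  lift3 t3 (fun a b c => t2 (m (t2 a b)) (f c)).

Definition tensS_id (S : DD -> DD) : DDD -> DDD :=
  lift3 t3 (fun a b c => lift2 t2 (fun a' b' => t3 a' b' c) (S (t2 a b))).

Definition tens_idS (S : DD -> DD) : DDD -> DDD :=
  lift3 t3 (fun a b c => lift2 t2 (fun b' c' => t3 a b' c') (S (t2 b c))).

Definition hom_assoc (mu : DD -> D) (alpha : D -> D) : Prop :=
  [/\ is_lin mu, is_lin alpha,
      (forall a a', alpha (mu (t2 a a')) = mu (t2 (alpha a) (alpha a'))) &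
      (forall a a' a'', mu (t2 (alpha a) (mu (t2 a' a''))) =
                        mu (t2 (mu (t2 a a')) (alpha a'')))].

End Tensor.

From HB Require Import structures.
From mathcomp Require Import all_boot all_algebra.
From Stdlib Require Import ClassicalEpsilon.
Set Implicit Arguments. Unset Strict Implicit. Unset Printing Implicit Defensive.
Import GRing.Theory.
Local Open Scope ring_scope.

(* All maps involved are linear, hence determined by their values on pure
   tensors.  Writing X = a (x) a' (x) a'' and m = mu T, one has
     m (alpha a (x) m (a' (x) a'')) = mu T (alpha (x) mu) (id (x) T) X
       = mu (alpha (x) mu) T1 (T (x) id) (id (x) T) X
       = mu (alpha (x) mu) T2 (id (x) T) (T (x) id) X,
   and Hom-associativity of mu turns alpha (x) mu into mu (x) alpha, after which
   the compatibility of T with mu (x) alpha reads the result back as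
   m (m (a (x) a') (x) alpha a''). *)

Section Linear.
Variable K : fieldType.

Lemma is_lin_comp (U V W : lmodType K) (f : V -> W) (g : U -> V) :
  is_lin f -> is_lin g -> is_lin (fun x => f (g x)).
Proof. by move=> Hf Hg a x y; rewrite Hg Hf. Qed.

Lemma is_lin_comb (U V : lmodType K) (f g : U -> V) (k : K) :
  is_lin f -> is_lin g -> is_lin (fun x => k *: f x + g x).
Proof.
move=> Hf Hg a x y; rewrite Hf Hg !scalerDr !scalerA mulrC.
by rewrite -!addrA; congr (_ + _); rewrite addrCA.
Qed.

Lemma lift2_spec (U V W X : lmodType K) (t : U -> V -> W) (f : U -> V -> X) :
  is_tensor2 t -> bilin f ->
  is_lin (lift2 t f) /\ forall u v, lift2 t f (t u v) = f u v.
Proof.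
move=> [_ Huniv] Hf; have [g [Hg _]] := Huniv X f Hf.
exact: (epsilon_spec _ (fun g => is_lin g /\ forall u v, g (t u v) = f u v)
  (ex_intro _ g Hg)).
Qed.

Lemma lift3_spec (U V W X Y : lmodType K) (t : U -> V -> W -> X)
  (f : U -> V -> W -> Y) :
  is_tensor3 t -> trilin f ->
  is_lin (lift3 t f) /\ forall u v w, lift3 t f (t u v w) = f u v w.
Proof.
move=> [_ Huniv] Hf; have [g [Hg _]] := Huniv Y f Hf.
exact: (epsilon_spec _ (fun g => is_lin g /\ forall u v w, g (t u v w) = f u v w)
  (ex_intro _ g Hg)).
Qed.

Lemma tensor2_ext (U V W X : lmodType K) (t : U -> V -> W) (g h : W -> X) :
  is_tensor2 t -> is_lin g -> is_lin h ->
  (forall u v, g (t u v) = h (t u v)) -> forall w, g w = h w.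
Proof.
move=> [[Htl Htr] Huniv] Hg Hh Egh.
have Hb : bilin (fun u v => g (t u v)) by split=> ?; apply: is_lin_comp.
have [g0 [_ uniq_g0]] := Huniv _ _ Hb.
have <- := uniq_g0 g (conj Hg (fun _ _ => erefl)).
by have <- := uniq_g0 h (conj Hh (fun u v => esym (Egh u v))).
Qed.

Lemma tensor3_ext (U V W X Y : lmodType K) (t : U -> V -> W -> X)
  (g h : X -> Y) :
  is_tensor3 t -> is_lin g -> is_lin h ->
  (forall u v w, g (t u v w) = h (t u v w)) -> forall x, g x = h x.
Proof.
move=> [[Ht1 [Ht2 Ht3]] Huniv] Hg Hh Egh.
have Hb : trilin (fun u v w => g (t u v w)).
  by split; [|split] => ? ?; apply: is_lin_comp.
have [g0 [_ uniq_g0]] := Huniv _ _ Hb.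
have <- := uniq_g0 g (conj Hg (fun _ _ _ => erefl)).
by have <- := uniq_g0 h (conj Hh (fun u v w => esym (Egh u v w))).
Qed.

End Linear.

Section TensorMaps.
Variables (K : fieldType) (D DD DDD : lmodType K).
Variables (t2 : D -> D -> DD) (t3 : D -> D -> D -> DDD).
Hypotheses (Ht2 : is_tensor2 t2) (Ht3 : is_tensor3 t3).

Lemma t2_linl v : is_lin (t2^~ v). Proof. by case: Ht2 => [[]]. Qed.
Lemma t2_linr u : is_lin (t2 u). Proof. by case: Ht2 => [[]]. Qed.
Lemma t3_lin1 v w : is_lin (fun u => t3 u v w). Proof. by case: Ht3 => [[]]. Qed.
Lemma t3_lin2 u w : is_lin (fun v => t3 u v w). Proof. by case: Ht3 => [[? []]]. Qed.
Lemma t3_lin3 u v : is_lin (t3 u v). Proof. by case: Ht3 => [[? []]]. Qed.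

Definition tens_left (a : D) : DD -> DDD := lift2 t2 (t3 a).
Definition tens_right (c : D) : DD -> DDD := lift2 t2 (fun a b => t3 a b c).

Lemma tens_left_spec a :
  is_lin (tens_left a) /\ forall u v, tens_left a (t2 u v) = t3 a u v.
Proof. by apply: lift2_spec => //; split=> ?; [apply: t3_lin2|apply: t3_lin3]. Qed.

Lemma tens_right_spec c :
  is_lin (tens_right c) /\ forall u v, tens_right c (t2 u v) = t3 u v c.
Proof. by apply: lift2_spec => //; split=> ?; [apply: t3_lin1|apply: t3_lin2]. Qed.

Lemma tens_left_linl y : is_lin (tens_left^~ y).
Proof.
move=> k a b; apply: (tensor2_ext (h := fun y => k *: tens_left a y + tens_left b y)
  Ht2 (tens_left_spec _).1) y.
  exact: is_lin_comb (tens_left_spec a).1 (tens_left_spec b).1.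
by move=> u v; rewrite !(tens_left_spec _).2 t3_lin1.
Qed.

Lemma tens_right_linl y : is_lin (tens_right^~ y).
Proof.
move=> k a b; apply: (tensor2_ext (h := fun y => k *: tens_right a y + tens_right b y)
  Ht2 (tens_right_spec _).1) y.
  exact: is_lin_comb (tens_right_spec a).1 (tens_right_spec b).1.
by move=> u v; rewrite !(tens_right_spec _).2 t3_lin3.
Qed.

Section Induced.
Variables (f g : D -> D) (m : DD -> D) (S : DD -> DD).
Hypotheses (Hf : is_lin f) (Hg : is_lin g) (Hm : is_lin m) (HS : is_lin S).

Lemma tens2_spec :
  is_lin (tens2 t2 f g) /\ forall a b, tens2 t2 f g (t2 a b) = t2 (f a) (g b).
Proof.
apply: lift2_spec => //; split=> ? ? ? ? /=.
  by rewrite Hf t2_linl.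
by rewrite Hg t2_linr.
Qed.

Lemma tensS_id_spec : is_lin (tensS_id t2 t3 S) /\
  forall u v w, tensS_id t2 t3 S (t3 u v w) = tens_right w (S (t2 u v)).
Proof.
apply: lift3_spec => //; split; [|split] => ? ? ? ? ? /=.
- by rewrite t2_linl HS; exact: (tens_right_spec _).1.
- by rewrite t2_linr HS; exact: (tens_right_spec _).1.
- exact: tens_right_linl.
Qed.

Lemma tens_idS_spec : is_lin (tens_idS t2 t3 S) /\
  forall u v w, tens_idS t2 t3 S (t3 u v w) = tens_left u (S (t2 v w)).
Proof.
apply: lift3_spec => //; split; [|split] => ? ? ? ? ? /=.
- exact: tens_left_linl.
- by rewrite t2_linl HS; exact: (tens_left_spec _).1.
- by rewrite t2_linr HS; exact: (tens_left_spec _).1.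
Qed.

Lemma tens_id_m_spec : is_lin (tens_id_m t2 t3 f m) /\
  forall u v w, tens_id_m t2 t3 f m (t3 u v w) = t2 (f u) (m (t2 v w)).
Proof.
apply: lift3_spec => //; split; [|split] => ? ? ? ? ? /=.
- by rewrite Hf t2_linl.
- by rewrite t2_linl Hm t2_linr.
- by rewrite t2_linr Hm t2_linr.
Qed.

Lemma tens_m_id_spec : is_lin (tens_m_id t2 t3 m f) /\
  forall u v w, tens_m_id t2 t3 m f (t3 u v w) = t2 (m (t2 u v)) (f w).
Proof.
apply: lift3_spec => //; split; [|split] => ? ? ? ? ? /=.
- by rewrite t2_linl Hm t2_linl.
- by rewrite t2_linr Hm t2_linl.
- by rewrite Hf t2_linr.
Qed.

Lemma tens_id_m_left a y : tens_id_m t2 t3 f m (tens_left a y) = t2 (f a) (m y).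
Proof.
have [Lfm Efm] := tens_id_m_spec; have [La Ea] := tens_left_spec a.
apply: (tensor2_ext (g := fun y => tens_id_m t2 t3 f m (tens_left a y))
  (h := fun y => t2 (f a) (m y)) Ht2) y.
- exact: is_lin_comp Lfm La.
- exact: is_lin_comp (t2_linr _) Hm.
- by move=> u v; rewrite Ea Efm.
Qed.

Lemma tens_m_id_right c y : tens_m_id t2 t3 m f (tens_right c y) = t2 (m y) (f c).
Proof.
have [Lmf Emf] := tens_m_id_spec; have [Lc Ec] := tens_right_spec c.
apply: (tensor2_ext (g := fun y => tens_m_id t2 t3 m f (tens_right c y))
  (h := fun y => t2 (m y) (f c)) Ht2) y.
- exact: is_lin_comp Lmf Lc.
- exact: is_lin_comp (t2_linl _) Hm.
- by move=> u v; rewrite Ec Emf.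
Qed.

End Induced.

Section HomAssociative.
Variables (mu : DD -> D) (alpha : D -> D).
Hypothesis HD : hom_assoc t2 mu alpha.

Lemma hom_mul_tens2 x : alpha (mu x) = mu (tens2 t2 alpha alpha x).
Proof.
have [Hmu Hal Hmul _] := HD; have [L2 E2] := tens2_spec Hal Hal.
apply: (tensor2_ext (g := fun x => alpha (mu x))
  (h := fun x => mu (tens2 t2 alpha alpha x)) Ht2) x.
- exact: is_lin_comp Hal Hmu.
- exact: is_lin_comp Hmu L2.
- by move=> u v; rewrite E2 Hmul.
Qed.

Lemma hom_assoc_tens3 z :
  mu (tens_id_m t2 t3 alpha mu z) = mu (tens_m_id t2 t3 mu alpha z).
Proof.
have [Hmu Hal _ Hass] := HD.
have [L1 E1] := tens_id_m_spec Hal Hmu; have [L2 E2] := tens_m_id_spec Hal Hmu.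
apply: (tensor3_ext (g := fun z => mu (tens_id_m t2 t3 alpha mu z))
  (h := fun z => mu (tens_m_id t2 t3 mu alpha z)) Ht3) z.
- exact: is_lin_comp Hmu L1.
- exact: is_lin_comp Hmu L2.
- by move=> u v w; rewrite E1 E2 Hass.
Qed.

End HomAssociative.

End TensorMaps.

Theorem proposition2p1 (K : fieldType) (D DD DDD : lmodType K)
  (t2 : D -> D -> DD) (t3 : D -> D -> D -> DDD)
  (Ht2 : is_tensor2 t2) (Ht3 : is_tensor3 t3)
  (mu : DD -> D) (alpha : D -> D) (HD : hom_assoc t2 mu alpha)
  (T : DD -> DD) (HT : is_lin T)
  (T1 T2 : DDD -> DDD) (HT1 : is_lin T1) (HT2 : is_lin T2)
  (H1 : (tens2 t2 alpha alpha \o T) = (T \o tens2 t2 alpha alpha))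
  (H2 : (T \o tens_id_m t2 t3 alpha mu) =
        (tens_id_m t2 t3 alpha mu \o T1 \o tensS_id t2 t3 T))
  (H3 : (T \o tens_m_id t2 t3 mu alpha) =
        (tens_m_id t2 t3 mu alpha \o T2 \o tens_idS t2 t3 T))
  (H4 : (T1 \o tensS_id t2 t3 T \o tens_idS t2 t3 T) =
        (T2 \o tens_idS t2 t3 T \o tensS_id t2 t3 T)) :
  hom_assoc t2 (mu \o T) alpha.
Proof.
have [Hmu Hal _ _] := HD.
split=> [||a a'|a a' a''] /=.
- exact: is_lin_comp.
- exact: Hal.
- rewrite (hom_mul_tens2 Ht2 HD); move: (congr1 (@^~ (t2 a a')) H1) => /= ->.
  by rewrite (tens2_spec Ht2 Hal Hal).2.
rewrite -(tens_id_m_left Ht2 Ht3 Hal Hmu) -(tens_idS_spec Ht2 Ht3 HT).2.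
rewrite -(tens_m_id_right Ht2 Ht3 Hal Hmu) -(tensS_id_spec Ht2 Ht3 HT).2.
set X := t3 a a' a''.
move: (congr1 (@^~ (tens_idS t2 t3 T X)) H2) => /= ->.
move: (congr1 (@^~ X) H4) => /= ->.
move: (congr1 (@^~ (tensS_id t2 t3 T X)) H3) => /= ->.
exact: hom_assoc_tens3.
Qed.
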